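(* Let $m\ge n$, $0\le r<n$, $A^1,\dots,A^l\in\mathbb{R}^{m\times n}$, $b\in\mathbb{R}^l$, and let $X\in\mathcal{L}\cap\mathcal{M}(r)$ of rank $s$ with SVD $X=U\Sigma V^\top$ as in the context. If Assumption 2 holds at $X$, then $$\mathrm{T}^B_{\mathcal{L}\cap\mathcal{M}_X(r)}(X)=\mathrm{T}_{\mathcal{L}}(X)\cap\mathrm{T}^B_{\mathcal{M}_X(r)}(X).$$
   Context: $\langle X,Y\rangle=\sum_{i,j}X_{ij}Y_{ij}$. $\mathcal{A}(X)=(\langle A^1,X\rangle,\dots,\langle A^l,X\rangle)^\top$, $\mathcal{L}=\{X:\mathcal{A}(X)=b\}$, $\mathrm{T}_\mathcal{L}(X)=\{\Xi:\langle A^i,\Xi\rangle=0,\ i=1,\dots,l\}$, $\mathcal{M}(r)=\{X:\operatorname{rank}(X)\le r\}$. SVD convention: $X=U\Sigma V^\top$ with $U$, $V$ orthogonal of sizes $m$, $n$, $\Sigma$ with diagonal $\sigma_1\ge\dots\ge\sigma_s>0$ followed by zeros, $\Gamma=\{1,\dots,s\}$; $U_J,V_J$ are column submatrices indexed by $J$. $\mathcal{J}=\{J\subseteq\{1,\dots,n\}:|J|=r,\ \Gamma\subseteq J\}$, $\mathcal{M}_X(J)=\{UBV_J^\top:B\in\mathbb{R}^{m\times r}\}$, $\mathcal{M}_X(r)=\bigcup_{J\in\mathcal{J}}\mathcal{M}_X(J)$. The Bouligand tangent cone $\mathrm{T}^B_\Omega(X)$ of a closed set $\Omega$ at $X\in\Omega$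 is the set of $\Xi$ for which there exist $X^k\in\Omega$, $X^k\to X$, $t_k\downarrow0$ with $(X^k-X)/t_k\to\Xi$. $R^i_X=U^\top A^iV_\Gamma$; Assumption 2 at $X$: $R^1_X,\dots,R^l_X$ are linearly independent. *)

From HB Require Import structures.
From mathcomp Require Import all_boot all_order all_algebra.
From mathcomp Require Import all_classical all_reals all_analysis.
Set Implicit Arguments. Unset Strict Implicit. Unset Printing Implicit Defensive.
Import Order.TTheory GRing.Theory Num.Theory.
Import numFieldNormedType.Exports.
Local Open Scope classical_set_scope.
Local Open Scope ring_scope.

Section Defs.
Variable R : realType.

Definition mxdot (m n : nat) (X Y : 'M[R]_(m, n)) : R :=
  \sum_(i < m) \sum_(j < n) X i j * Y i j.

Definition affL (m n l : nat) (A : 'I_l -> 'M[R]_(m, n)) (b : 'I_l -> R)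
  : set 'M[R]_(m, n) := [set X | forall i, mxdot (A i) X = b i].

Definition tangL (m n l : nat) (A : 'I_l -> 'M[R]_(m, n))
  : set 'M[R]_(m, n) := [set Xi | forall i, mxdot (A i) Xi = 0].

(* column submatrix V_J (columns indexed by J, in increasing order) *)
Definition colsub_set (k n : nat) (V : 'M[R]_(k, n)) (J : {set 'I_n})
  : 'M[R]_(k, #|J|) := \matrix_(i < k, c < #|J|) V i (enum_val c).

(* Gamma = {1,...,s} (0-based: indices < s) *)
Definition Gam (n s : nat) : {set 'I_n} := [set j : 'I_n | (j < s)%N].

Definition MXJ (m n : nat) (U : 'M[R]_m) (V : 'M[R]_n) (J : {set 'I_n})
  : set 'M[R]_(m, n) :=
  [set Y | exists B : 'M[R]_(m, #|J|), Y = U *m B *m (colsub_set V J)^T].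

Definition calJ (n r s : nat) : set {set 'I_n} :=
  [set J | #|J| = r /\ @Gam n s \subset J].

Definition MXr (m n r s : nat) (U : 'M[R]_m) (V : 'M[R]_n)
  : set 'M[R]_(m, n) :=
  [set Y | exists J : {set 'I_n}, @calJ n r s J /\ MXJ U V J Y].

Definition bouligand (m n : nat) (Omega : set 'M[R]_(m, n)) (X : 'M[R]_(m, n))
  : set 'M[R]_(m, n) :=
  [set Xi | exists (Xk : nat -> 'M[R]_(m, n)) (t : nat -> R),
     (forall k, Omega (Xk k)) /\ (forall k, 0 < t k) /\
     t @ \oo --> (0 : R) /\ Xk @ \oo --> X /\
     (fun k => (t k)^-1 *: (Xk k - X)) @ \oo --> Xi].

Definition RX (m n : nat) (U : 'M[R]_m) (V : 'M[R]_n) (s : nat)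
  (Ai : 'M[R]_(m, n)) : 'M[R]_(m, #|Gam n s|) :=
  U^T *m Ai *m colsub_set V (Gam n s).

Definition lin_indep (p q l : nat) (F : 'I_l -> 'M[R]_(p, q)) : Prop :=
  forall c : 'I_l -> R, \sum_(i < l) c i *: F i = 0 -> forall i, c i = 0.

End Defs.

From HB Require Import structures.
From mathcomp Require Import all_boot all_order all_algebra.
From mathcomp Require Import all_classical all_reals all_analysis.
Import Order.TTheory GRing.Theory Num.Theory.
Import numFieldNormedType.Exports.
Local Open Scope classical_set_scope.
Local Open Scope ring_scope.

(* With U and V orthogonal, M_X(J) is the linear subspace of matrices Y whose
   coordinate matrix Y V vanishes outside the columns J, and it contains X
   because Gamma is a subset of J.  Hence M_X(r) is a finite union of closed
   subspaces through X, so its Bouligand cone at X lies inside it: the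
   difference quotients stay in the union.  Conversely, if Xi lies in T_L(X)
   and in some M_X(J), the whole ray X + t Xi lies in L and M_X(J). *)

Set Implicit Arguments.
Unset Strict Implicit.
Unset Printing Implicit Defensive.

Section MatrixFunctionals.
Variables (R : realType) (p q : nat).
Implicit Types (c Y Z : 'M[R]_(p, q)) (t : R).

Lemma mxdotD c Y Z : mxdot c (Y + Z) = mxdot c Y + mxdot c Z.
Proof.
rewrite /mxdot -big_split /=; apply: eq_bigr => i _.
by rewrite -big_split /=; apply: eq_bigr => j _; rewrite mxE mulrDr.
Qed.

Lemma mxdotZ c t Y : mxdot c (t *: Y) = t * mxdot c Y.
Proof.
rewrite /mxdot mulr_sumr; apply: eq_bigr => i _.
by rewrite mulr_sumr; apply: eq_bigr => j _; rewrite mxE mulrCA.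
Qed.

Lemma mxdotB c Y Z : mxdot c (Y - Z) = mxdot c Y - mxdot c Z.
Proof. by rewrite mxdotD -scaleN1r mxdotZ mulN1r. Qed.

Lemma mxdot_cvg c {T : Type} (F : set_system T) {FF : Filter F}
    (Z : T -> 'M[R]_(p, q)) Xi :
  Z @ F --> Xi -> mxdot c (Z x) @[x --> F] --> mxdot c Xi.
Proof.
move=> Zcvg; apply: cvg_big => // [|i _]; first exact: add_continuous.
apply: cvg_big => // [|j _]; first exact: add_continuous.
apply: cvgMl_tmp.
exact: cvg_comp _ _ Zcvg (@coord_continuous _ p q i j Xi).
Qed.

Lemma mulmx_coord_continuous k (W : 'M[R]_(q, k)) a j :
  continuous (fun Y : 'M[R]_(p, q) => (Y *m W) a j).
Proof.
move=> Y; rewrite /continuous_at.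
under eq_fun do rewrite mxE.
rewrite mxE; apply: cvg_big; [exact: add_continuous|exact: nbhs_filter|].
move=> i _; apply: cvgMr_tmp; [exact: nbhs_filter|].
exact: (@coord_continuous _ p q a i Y).
Qed.

End MatrixFunctionals.

Arguments mxdot_cvg {R p q} c {T F FF Z Xi}.

Section Bouligand.
Variables (R : realType) (m n : nat).
Implicit Types (Omega : set 'M[R]_(m, n)) (X Xi : 'M[R]_(m, n)).

Lemma bouligandS Omega Omega' X :
  Omega `<=` Omega' -> bouligand Omega X `<=` bouligand Omega' X.
Proof.
move=> sub Xi [Xk [t [OXk [t0 [tcvg [Xkcvg Xicvg]]]]]].
by exists Xk, t; do !split => // k; apply: sub.
Qed.

Lemma bouligand_ray Omega X Xi :
  (forall t, 0 < t -> Omega (X + t *: Xi)) -> bouligand Omega X Xi.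
Proof.
move=> ray; exists (fun k => X + harmonic k *: Xi), harmonic.
split; [by move=> k; apply/ray/harmonic_gt0|split; [exact: harmonic_gt0|]].
split; [exact: cvg_harmonic|split].
- rewrite -[X in _ --> X]addr0 -(scale0r Xi).
  by apply: cvgD; [exact: cvg_cst|exact: cvgZr_tmp cvg_harmonic].
- suff -> : (fun k => (harmonic k)^-1 *: (X + harmonic k *: Xi - X)) = fun=> Xi.
    exact: cvg_cst.
  apply: funext => k; rewrite addrAC subrr add0r scalerA mulVf ?scale1r //.
  by rewrite gt_eqF ?harmonic_gt0.
Qed.

Lemma bouligand_bigcup_subspaces (I : choiceType) (D : set I)
    (F : I -> set 'M[R]_(m, n)) X :
  finite_set D -> (forall i, closed (F i)) ->
  (forall i u v Y Z, F i Y -> F i Z -> F i (u *: Y + v *: Z)) ->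
  (forall i, D i -> F i X) ->
  bouligand (\bigcup_(i in D) F i) X `<=` \bigcup_(i in D) F i.
Proof.
move=> finD closedF Flin FX Xi [Xk [t [FXk [_ [_ [_ Xicvg]]]]]].
apply: (closed_cvg _ (closed_bigcup finD (fun i _ => closedF i)) _ _ Xicvg).
apply: nearW => k; have [i Di FXki] := FXk k; exists i => //.
by rewrite scalerBr -scaleNr; apply: Flin => //; exact: FX.
Qed.

Variables (l : nat) (A : 'I_l -> 'M[R]_(m, n)) (b : 'I_l -> R).

Lemma affL_tangL X Xi t : affL A b X -> tangL A Xi -> affL A b (X + t *: Xi).
Proof. by move=> XL XiT i; rewrite mxdotD mxdotZ XL XiT mulr0 addr0. Qed.

Lemma bouligand_affL X : affL A b X -> bouligand (affL A b) X `<=` tangL A.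
Proof.
move=> XL Xi [Xk [t [XkL [_ [_ [_ Xicvg]]]]]] i.
have quotient0 : (fun k => mxdot (A i) ((t k)^-1 *: (Xk k - X))) = fun=> 0.
  by apply: funext => k; rewrite mxdotZ mxdotB XkL XL subrr mulr0.
apply: (cvg_unique _ (mxdot_cvg (A i) Xicvg)); first exact: norm_hausdorff.
by rewrite /= quotient0; exact: cvg_cst.
Qed.

End Bouligand.

Section ColumnSupport.
Variables (R : realType) (m n : nat) (V : 'M[R]_n).
Implicit Types (J : {set 'I_n}) (Y Z : 'M[R]_(m, n)).

Definition colsupp J : set 'M[R]_(m, n) :=
  [set Y | forall a j, j \notin J -> (Y *m V) a j = 0].

Lemma colsupp_closed J : closed (colsupp J).
Proof.
have -> : colsupp J = \bigcap_(aj in [set aj | aj.2 \notin J])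
                        [set Y | (Y *m V) aj.1 aj.2 = 0].
  apply/seteqP; split => [Y YJ [a j] /= jJ|Y YJ a j jJ]; first exact: YJ.
  exact: (YJ (a, j)).
apply: closed_bigI => -[a j] _.
apply: (@preimage_closed _ _ (fun Y : 'M[R]_(m, n) => (Y *m V) a j) [set 0]).
  by move=> Y _; exact: mulmx_coord_continuous.
exact: closed_eq.
Qed.

Lemma colsupp_lincomb J u v Y Z :
  colsupp J Y -> colsupp J Z -> colsupp J (u *: Y + v *: Z).
Proof.
move=> YJ ZJ a j jJ.
have -> : ((u *: Y + v *: Z) *m V) a j = u * (Y *m V) a j + v * (Z *m V) a j.
  by rewrite mulmxDl -!scalemxAl !mxE.
by rewrite YJ // ZJ // !mulr0 addr0.
Qed.

Lemma trmx_colsub_mulmxE k J (W : 'M[R]_(n, k)) c j :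
  ((colsub_set V J)^T *m W) c j = (V^T *m W) (enum_val c) j.
Proof. by rewrite !mxE; apply: eq_bigr => i _; rewrite !mxE. Qed.

Hypothesis VV : V^T *m V = 1%:M.

Lemma colsupp_mulmx_colsub_tr J (B : 'M[R]_(m, #|J|)) :
  colsupp J (B *m (colsub_set V J)^T).
Proof.
move=> a j jJ; rewrite -mulmxA mxE big1 // => c _.
rewrite trmx_colsub_mulmxE VV mxE; case: eqP => [ej|_]; last by rewrite mulr0.
by have := enum_valP c; rewrite ej (negbTE jJ).
Qed.

(* V_J V_J^T is V V^T with the columns off J dropped, and Y V is zero there. *)
Lemma colsupp_colsub_proj J Y :
  colsupp J Y -> Y *m colsub_set V J *m (colsub_set V J)^T = Y.
Proof.
move=> YJ; apply/matrixP => a i; rewrite mxE.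
transitivity (\sum_(j in J) (Y *m V) a j * V i j).
  rewrite (big_enum_val (fun j => (Y *m V) a j * V i j)).
  apply: eq_bigr => c _; rewrite !mxE; congr (_ * _).
  by apply: eq_bigr => k _; rewrite mxE.
rewrite -[in RHS](mulmx1 Y) -(mulmx1C VV) mulmxA mxE big_mkcond /=.
apply: eq_bigr => j _; rewrite [V^T j i]mxE.
by case: ifP => // /negbT jJ; rewrite YJ // mul0r.
Qed.

Lemma colsupp_MXJ (U : 'M[R]_m) J :
  U^T *m U = 1%:M -> MXJ U V J = colsupp J.
Proof.
move=> UU; apply/seteqP; split => [Y [B ->]|Y YJ].
  exact: colsupp_mulmx_colsub_tr.
exists (U^T *m Y *m colsub_set V J).
by rewrite !mulmxA (mulmx1C UU) mul1mx colsupp_colsub_proj.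
Qed.

Lemma colsupp_svd (U : 'M[R]_m) (sigma : nat -> R) s J X :
  (forall i, (s <= i)%N -> sigma i = 0) ->
  X = U *m (\matrix_(i < m, j < n) (if (i : nat) == j then sigma i else 0))
        *m V^T ->
  Gam n s \subset J -> colsupp J X.
Proof.
move=> sigma0 -> /fintype.subsetP GJ a j jJ.
have sj : (s <= j)%N.
  by rewrite leqNgt; apply: contra jJ => js; apply: GJ; rewrite inE.
rewrite -mulmxA VV mulmx1 mxE big1 // => k _.
by rewrite mxE; case: eqP => [->|_]; rewrite ?sigma0 ?mulr0.
Qed.

Lemma MXrE (U : 'M[R]_m) r s :
  U^T *m U = 1%:M -> MXr r s U V = \bigcup_(J in calJ r s) colsupp J.
Proof.
move=> UU; apply/seteqP; split => Y [J].
  by move=> [JJ]; rewrite colsupp_MXJ //; exists J.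
by move=> JJ YJ; exists J; rewrite colsupp_MXJ.
Qed.

End ColumnSupport.

Theorem lemma3p3 (R : realType) (m n r l s : nat)
  (A : 'I_l -> 'M[R]_(m, n)) (b : 'I_l -> R) (X : 'M[R]_(m, n))
  (U : 'M[R]_m) (V : 'M[R]_n) (Sigma : 'M[R]_(m, n)) (sigma : nat -> R) :
  (n <= m)%N -> (r < n)%N ->
  affL A b X -> (\rank X <= r)%N -> \rank X = s ->
  U^T *m U = 1%:M -> V^T *m V = 1%:M ->
  Sigma = \matrix_(i < m, j < n) (if (i : nat) == j then sigma i else 0) ->
  (forall i j, (i <= j)%N -> (j < s)%N -> sigma j <= sigma i) ->
  (forall i, (i < s)%N -> 0 < sigma i) ->
  (forall i, (s <= i)%N -> sigma i = 0) ->
  X = U *m Sigma *m V^T ->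
  lin_indep (fun i => RX U V s (A i)) ->
  bouligand (affL A b `&` MXr r s U V) X
  = tangL A `&` bouligand (MXr r s U V) X.
Proof.
move=> _ _ XL _ _ UU VV -> _ _ sigma0 Xsvd _.
have XJ J : calJ r s J -> colsupp V J X.
  by case=> _ GJ; exact: colsupp_svd sigma0 Xsvd GJ.
rewrite (MXrE VV r s UU); apply/seteqP; split => Xi.
  move=> XiB; split; last exact: bouligandS XiB.
  by apply: bouligand_affL XL _ _; exact: bouligandS XiB.
have cone_sub := bouligand_bigcup_subspaces finite_finset
  (@colsupp_closed _ _ _ V) (@colsupp_lincomb _ _ _ V) XJ.
move=> [XiT /cone_sub [J JJ XiJ]].
apply: bouligand_ray => t _; split; first exact: affL_tangL.
by exists J => //; rewrite -[X]scale1r; apply: colsupp_lincomb; [exact: XJ|].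
Qed.
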